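(* Let $(r_I)_I$ be a family of idempotent functions $r_I:[0,1]^I\times[0,1]\to[0,1]^I\times[0,1]$ satisfying (1) $r_I(u,z)=(u,z)$ iff $\partial_I u=1$ or $z=0$, and (2) $r_J(f\times\mathrm{id})r_I=r_J(f\times\mathrm{id})$ for every strict $f\in\mathrm{Hom}(I,J)$. Let $(r_\psi)$, for $I$ a finite set of names and $\psi\in\mathbb{F}(I)$, be functions $[0,1]^I\times[0,1]\to[0,1]^I\times[0,1]$ satisfying: (a) $r_\psi=\mathrm{id}$ if $\psi=1_\mathbb{F}$; (b) $r_\psi=r_\psi r_I$ if $\psi\neq1_\mathbb{F}$; (c) $r_\psi(u,z)=(u,z)$ if $z=0$; (d) $r_\psi((ib)\times\mathrm{id})=((ib)\times\mathrm{id})r_{\psi(ib)}$ for $i\in I$, $b\in\{0,1\}$. Then for every morphism $f\in\mathrm{Hom}(I,J)$ and every $\psi\in\mathbb{F}(J)$, $$r_\psi\circ(f\times\mathrm{id})=(f\times\mathrm{id})\circ r_{\psi f}.$$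
   Context: Fix a countably infinite set of names. $\mathsf{dM}(J)$ is the free de Morgan algebra on $J$. The cube category $\mathcal{C}$ has finite sets of names as objects; $f\in\mathrm{Hom}(I,J)$ is a map $J\to\mathsf{dM}(I)$, composed by substitution; $f$ is strict if it never takes value $0$ or $1$. Using the de Morgan algebra $([0,1],\min,\max,1-x)$, $f\in\mathrm{Hom}(I,J)$ induces $f:[0,1]^I\to[0,1]^J$, $(fu)_j=f(j)$ evaluated at $u$. The face map $(ib)\in\mathrm{Hom}(I-\{i\},I)$ sends $i\mapsto b$, $j\mapsto j$ otherwise. The face lattice $\mathbb{F}$ is the distributive lattice generated by $(i=0),(i=1)$ for names $i$ subject to $(i=0)\wedge(i=1)=0_\mathbb{F}$; $\mathbb{F}(I)$ is the sublattice generated by generators with $i\in I$. For $\psi\in\mathbb{F}(J)$ and $f\in\mathrm{Hom}(I,J)$, $\psi f\in\mathbb{F}(I)$ is the substitution sending $(j=1)$ to $(f(j)=1)$ and $(j=0)$ to $(1-f(j)=1)$, where $r\mapsto(r=1)$ is the lattice map $\mathsf{dM}(I)\to\mathbb{F}(I)$ with $i\mapsto(i=1)$, $1-i\mapsto(i=0)$, $0\mapsto 0_\mathbb{F}$, $1\mapsto1_\mathbb{F}$; in particular $\psi(ib)$ substitutes $(i=b)\mapsto 1_\mathbb{F}$, $(i=1-b)\mapsto 0_\mathbb{F}$. For $u\in[0,1]^I$, $\partial_I u=1$ means some $u_i\in\{0,1\}$. *)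

From mathcomp Require Import all_boot.
From Stdlib Require Import Reals Lra.

Set Implicit Arguments.
Unset Strict Implicit.
Unset Printing Implicit Defensive.

(* Names: the countably infinite set nat.  A finite set of names is
   represented canonically by its strictly increasing enumeration, so that
   equal sets are equal objects. *)
Definition fset := {s : seq nat | sorted ltn s}.
Definition fmem (I : fset) : pred nat := fun i => i \in sval I.

Lemma fremove_proof (I : fset) (i : nat) :
  sorted ltn (filter (predC1 i) (sval I)).
Proof. apply: sorted_filter; [exact: ltn_trans | exact: (svalP I)]. Qed.

Definition fremove (I : fset) (i : nat) : fset :=
  exist _ (filter (predC1 i) (sval I)) (fremove_proof I i).

Definition name_in (I : fset) := {i : nat | fmem I i}.

Definition unitI := {x : R | (0 <= x <= 1)%R}.

Lemma u0_proof : (0 <= 0 <= 1)%R. Proof. split; [apply Rle_refl | apply Rle_0_1]. Qed.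
Lemma u1_proof : (0 <= 1 <= 1)%R. Proof. split; [apply Rle_0_1 | apply Rle_refl]. Qed.
Definition u0 : unitI := exist _ 0%R u0_proof.
Definition u1 : unitI := exist _ 1%R u1_proof.

Lemma umin_proof (x y : unitI) : (0 <= Rmin (sval x) (sval y) <= 1)%R.
Proof.
case: x => x [hx0 hx1]; case: y => y [hy0 hy1] /=.
unfold Rmin; destruct (Rle_dec x y); split; assumption.
Qed.
Lemma umax_proof (x y : unitI) : (0 <= Rmax (sval x) (sval y) <= 1)%R.
Proof.
case: x => x [hx0 hx1]; case: y => y [hy0 hy1] /=.
unfold Rmax; destruct (Rle_dec x y); split; assumption.
Qed.
Lemma uneg_proof (x : unitI) : (0 <= 1 - sval x <= 1)%R.
Proof. case: x => x [hx0 hx1] /=; split; lra. Qed.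

Definition umin (x y : unitI) : unitI := exist _ _ (umin_proof x y).
Definition umax (x y : unitI) : unitI := exist _ _ (umax_proof x y).
Definition uneg (x : unitI) : unitI := exist _ _ (uneg_proof x).

(* Terms over the names; dM(I) = terms with variables in I, modulo dMeq,
   the congruence generated by the de Morgan algebra axioms
   (bounded distributive lattice + involutive negation + De Morgan law). *)
Inductive dMt : Type :=
| dVar  : nat -> dMt
| dZero : dMt
| dOne  : dMt
| dMeet : dMt -> dMt -> dMt
| dJoin : dMt -> dMt -> dMt
| dNeg  : dMt -> dMt.

Fixpoint dM_vars_in (I : fset) (t : dMt) : bool :=
  match t with
  | dVar i => fmem I i
  | dZero | dOne => true
  | dMeet a b | dJoin a b => dM_vars_in I a && dM_vars_in I b
  | dNeg a => dM_vars_in I a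
  end.

Inductive dMeq : dMt -> dMt -> Prop :=
| dMeq_refl a : dMeq a a
| dMeq_sym a b : dMeq a b -> dMeq b a
| dMeq_trans a b c : dMeq a b -> dMeq b c -> dMeq a c
| dMeq_meet a a' b b' : dMeq a a' -> dMeq b b' -> dMeq (dMeet a b) (dMeet a' b')
| dMeq_join a a' b b' : dMeq a a' -> dMeq b b' -> dMeq (dJoin a b) (dJoin a' b')
| dMeq_neg a a' : dMeq a a' -> dMeq (dNeg a) (dNeg a')
| dMeq_meetA a b c : dMeq (dMeet a (dMeet b c)) (dMeet (dMeet a b) c)
| dMeq_joinA a b c : dMeq (dJoin a (dJoin b c)) (dJoin (dJoin a b) c)
| dMeq_meetC a b : dMeq (dMeet a b) (dMeet b a)
| dMeq_joinC a b : dMeq (dJoin a b) (dJoin b a)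
| dMeq_meetJ a b : dMeq (dMeet a (dJoin a b)) a
| dMeq_joinM a b : dMeq (dJoin a (dMeet a b)) a
| dMeq_meetDl a b c : dMeq (dMeet a (dJoin b c)) (dJoin (dMeet a b) (dMeet a c))
| dMeq_meet1 a : dMeq (dMeet a dOne) a
| dMeq_join0 a : dMeq (dJoin a dZero) a
| dMeq_negK a : dMeq (dNeg (dNeg a)) a
| dMeq_negM a b : dMeq (dNeg (dMeet a b)) (dJoin (dNeg a) (dNeg b)).

Fixpoint evalU (rho : nat -> unitI) (t : dMt) : unitI :=
  match t with
  | dVar i => rho i
  | dZero => u0
  | dOne => u1
  | dMeet a b => umin (evalU rho a) (evalU rho b)
  | dJoin a b => umax (evalU rho a) (evalU rho b)
  | dNeg a => uneg (evalU rho a)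
  end.

Record hom (I J : fset) := Hom {
  hom_fun :> name_in J -> dMt;
  hom_vars : forall j, dM_vars_in I (hom_fun j)
}.

Definition strict (I J : fset) (f : hom I J) : Prop :=
  forall j : name_in J, ~ dMeq (f j) dZero /\ ~ dMeq (f j) dOne.

Definition cube (I : fset) := name_in I -> unitI.

(* extension of u : [0,1]^I to an assignment of all names (only the values on
   I matter for terms with variables in I) *)
Definition ext (I : fset) (u : cube I) : nat -> unitI :=
  fun i => match @insub nat (fmem I) _ i with Some k => u k | None => u0 end.

Definition hom_map (I J : fset) (f : hom I J) (u : cube I) : cube J :=
  fun j => evalU (ext u) (f j).

Definition hom_x (I J : fset) (f : hom I J) (p : cube I * unitI) : cube J * unitI :=
  (hom_map f p.1, p.2).

Lemma face_proof (I : fset) (i : nat) (b : bool) (j : name_in I) :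
  dM_vars_in (fremove I i)
    (if sval j == i then (if b then dOne else dZero) else dVar (sval j)).
Proof.
case: j => j hj /=; case: eqP => [_|ne]; first by case: b.
move: hj; rewrite /= /fmem /fremove /= mem_filter => ->; rewrite andbT; exact/eqP.
Qed.

Definition face (I : fset) (i : nat) (b : bool) : hom (fremove I i) I :=
  @Hom (fremove I i) I
    (fun j => if sval j == i then (if b then dOne else dZero) else dVar (sval j))
    (face_proof i b).

Definition boundary (I : fset) (u : cube I) : Prop :=
  exists k : name_in I, sval (u k) = 0%R \/ sval (u k) = 1%R.

Inductive Ft : Type :=
| FEq0  : nat -> Ft
| FEq1  : nat -> Ft
| FBot  : Ft
| FTop  : Ft
| FMeet : Ft -> Ft -> Ft
| FJoin : Ft -> Ft -> Ft.

Fixpoint F_vars_in (I : fset) (t : Ft) : bool :=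
  match t with
  | FEq0 i | FEq1 i => fmem I i
  | FBot | FTop => true
  | FMeet a b | FJoin a b => F_vars_in I a && F_vars_in I b
  end.

Inductive Feq : Ft -> Ft -> Prop :=
| Feq_refl a : Feq a a
| Feq_sym a b : Feq a b -> Feq b a
| Feq_trans a b c : Feq a b -> Feq b c -> Feq a c
| Feq_meet a a' b b' : Feq a a' -> Feq b b' -> Feq (FMeet a b) (FMeet a' b')
| Feq_join a a' b b' : Feq a a' -> Feq b b' -> Feq (FJoin a b) (FJoin a' b')
| Feq_meetA a b c : Feq (FMeet a (FMeet b c)) (FMeet (FMeet a b) c)
| Feq_joinA a b c : Feq (FJoin a (FJoin b c)) (FJoin (FJoin a b) c)
| Feq_meetC a b : Feq (FMeet a b) (FMeet b a)
| Feq_joinC a b : Feq (FJoin a b) (FJoin b a)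
| Feq_meetJ a b : Feq (FMeet a (FJoin a b)) a
| Feq_joinM a b : Feq (FJoin a (FMeet a b)) a
| Feq_meetDl a b c : Feq (FMeet a (FJoin b c)) (FJoin (FMeet a b) (FMeet a c))
| Feq_meet1 a : Feq (FMeet a FTop) a
| Feq_join0 a : Feq (FJoin a FBot) a
| Feq_01 i : Feq (FMeet (FEq0 i) (FEq1 i)) FBot.

(* r |-> (r = 1), the lattice map dM -> F with i |-> (i=1), 1-i |-> (i=0),
   0 |-> 0_F, 1 |-> 1_F; computed on terms by pushing negations to the
   generators.  toF true r = (r = 1), toF false r = (1 - r = 1). *)
Fixpoint toF (pos : bool) (t : dMt) : Ft :=
  match t with
  | dVar i => if pos then FEq1 i else FEq0 i
  | dZero => if pos then FBot else FTop
  | dOne => if pos then FTop else FBot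
  | dMeet a b => if pos then FMeet (toF pos a) (toF pos b)
                 else FJoin (toF pos a) (toF pos b)
  | dJoin a b => if pos then FJoin (toF pos a) (toF pos b)
                 else FMeet (toF pos a) (toF pos b)
  | dNeg a => toF (~~ pos) a
  end.

Fixpoint Fsubst (I J : fset) (f : hom I J) (psi : Ft) : Ft :=
  match psi with
  | FEq1 j => match @insub nat (fmem J) _ j with
              | Some k => toF true (f k) | None => FBot end
  | FEq0 j => match @insub nat (fmem J) _ j with
              | Some k => toF false (f k) | None => FBot end
  | FBot => FBot
  | FTop => FTop
  | FMeet a b => FMeet (Fsubst f a) (Fsubst f b)
  | FJoin a b => FJoin (Fsubst f a) (Fsubst f b)
  end.

From HB Require Import structures.
From mathcomp Require Import all_boot zify.
From Stdlib Require Import Reals Lra ProofIrrelevance Classical FunctionalExtensionality.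

(* Induction on |I| + |J|.  If some coordinate f(j) is a constant b, then f
   factors as (j b) o f' with f' : Hom(I, J - {j}) and psi f = (psi (j b)) f',
   so (d) reduces the claim for f to the claim for f'.  Otherwise f is strict.
   If psi = 1_F then psi f = 1_F as well and (a) makes both sides trivial.
   If not, (b) and (2) show that both sides depend on p only through
   q = r_I p; q is a fixed point of r_I, so by (1) either q lies in a face
   (i b) of the cube, where (d) and the claim for f o (i b) conclude, or q has
   last coordinate 0, where (c) concludes.  A coordinate is constant exactly
   when its value in the three-element de Morgan algebra is 0 or 1. *)

Set Implicit Arguments.
Unset Strict Implicit.
Unset Printing Implicit Defensive.

Ltac case_values e :=
  repeat match goal with |- context [e ?x] => case: (e x) end.

Inductive kleene := Kl0 | KlU | Kl1.

Definition kleene_eqb a b :=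
  match a, b with Kl0, Kl0 | KlU, KlU | Kl1, Kl1 => true | _, _ => false end.
Lemma kleene_eqP : Equality.axiom kleene_eqb.
Proof. by do 2 case; constructor. Qed.
HB.instance Definition _ := hasDecEq.Build kleene kleene_eqP.

Definition kl_of_bool (b : bool) : kleene := if b then Kl1 else Kl0.

Definition kmeet a b :=
  match a, b with
  | Kl0, _ | _, Kl0 => Kl0
  | Kl1, c | c, Kl1 => c
  | KlU, KlU => KlU
  end.
Definition kjoin a b :=
  match a, b with
  | Kl1, _ | _, Kl1 => Kl1
  | Kl0, c | c, Kl0 => c
  | KlU, KlU => KlU
  end.
Definition kneg a := match a with Kl0 => Kl1 | KlU => KlU | Kl1 => Kl0 end.

(* Evaluation in the three-element de Morgan algebra, every name sent to the
   middle element: [t] is provably constant iff its value is [Kl0] or [Kl1]. *)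
Fixpoint kleene_eval (t : dMt) : kleene :=
  match t with
  | dVar _ => KlU
  | dZero => Kl0
  | dOne => Kl1
  | dMeet a b => kmeet (kleene_eval a) (kleene_eval b)
  | dJoin a b => kjoin (kleene_eval a) (kleene_eval b)
  | dNeg a => kneg (kleene_eval a)
  end.

Lemma kleene_eval_dMeq a b : dMeq a b -> kleene_eval a = kleene_eval b.
Proof. by elim=> //= *; try congruence; case_values kleene_eval. Qed.

Lemma kleeneU_strict I J (f : hom I J) :
  (forall j, kleene_eval (f j) = KlU) -> strict f.
Proof. by move=> fU j; split=> /kleene_eval_dMeq; rewrite fU. Qed.

Lemma unitI_inj (x y : unitI) : sval x = sval y -> x = y.
Proof.
by case: x y => [x hx] [y hy] /= exy; subst y; rewrite (proof_irrelevance _ hx hy).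
Qed.

Definition unit_of_bool (b : bool) : unitI := if b then u1 else u0.

Ltac unit_arith :=
  apply: unitI_inj => /=; rewrite /Rmin /Rmax; repeat case: Rle_dec; lra.

Lemma umin0l x : umin u0 x = u0. Proof. case: x => x [? ?]; unit_arith. Qed.
Lemma umin0r x : umin x u0 = u0. Proof. case: x => x [? ?]; unit_arith. Qed.
Lemma umax1l x : umax u1 x = u1. Proof. case: x => x [? ?]; unit_arith. Qed.
Lemma umax1r x : umax x u1 = u1. Proof. case: x => x [? ?]; unit_arith. Qed.

Lemma evalU_kleene rho t b :
  kleene_eval t = kl_of_bool b -> evalU rho t = unit_of_bool b.
Proof.
elim: t b => [n|||a IHa c IHc|a IHa c IHc|a IHa] [] //=.
- case Ea: (kleene_eval a); case Ec: (kleene_eval c) => //= _.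
  rewrite (IHa true Ea) (IHc true Ec); unit_arith.
- case Ea: (kleene_eval a); case Ec: (kleene_eval c) => //= _;
  first [by rewrite (IHa false Ea) umin0l | by rewrite (IHc false Ec) umin0r].
- case Ea: (kleene_eval a); case Ec: (kleene_eval c) => //= _;
  first [by rewrite (IHa true Ea) umax1l | by rewrite (IHc true Ec) umax1r].
- case Ea: (kleene_eval a); case Ec: (kleene_eval c) => //= _.
  rewrite (IHa false Ea) (IHc false Ec); unit_arith.
- case Ea: (kleene_eval a) => //= _; rewrite (IHa false Ea); unit_arith.
- case Ea: (kleene_eval a) => //= _; rewrite (IHa true Ea); unit_arith.
Qed.

Lemma Feq_meet1l a : Feq (FMeet FTop a) a.
Proof. exact: Feq_trans (Feq_meetC _ _) (Feq_meet1 _). Qed.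

Lemma Feq_join0l a : Feq (FJoin FBot a) a.
Proof. exact: Feq_trans (Feq_joinC _ _) (Feq_join0 _). Qed.

Lemma Feq_join1l a : Feq (FJoin FTop a) FTop.
Proof.
apply: Feq_trans (Feq_joinM FTop a).
exact: Feq_join (Feq_refl _) (Feq_sym (Feq_meet1l a)).
Qed.

Lemma Feq_meet0l a : Feq (FMeet FBot a) FBot.
Proof.
apply: Feq_trans (Feq_meetJ FBot a).
exact: Feq_meet (Feq_refl _) (Feq_sym (Feq_join0l a)).
Qed.

Lemma Feq_join1r a : Feq (FJoin a FTop) FTop.
Proof. exact: Feq_trans (Feq_joinC _ _) (Feq_join1l a). Qed.

Lemma Feq_meet0r a : Feq (FMeet a FBot) FBot.
Proof. exact: Feq_trans (Feq_meetC _ _) (Feq_meet0l a). Qed.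

Definition F_of_bool (b : bool) : Ft := if b then FTop else FBot.

Lemma toF_kleene t b : kleene_eval t = kl_of_bool b ->
  Feq (toF true t) (F_of_bool b) /\ Feq (toF false t) (F_of_bool (~~ b)).
Proof.
elim: t b => [n|||a IHa c IHc|a IHa c IHc|a IHa] [] //=;
  try by split; apply: Feq_refl.
- case Ea: (kleene_eval a); case Ec: (kleene_eval c) => //= _.
  case: (IHa true Ea) (IHc true Ec) => [a1 a0] [c1 c0]; split.
  + exact: Feq_trans (Feq_meet a1 c1) (Feq_meet1 _).
  + exact: Feq_trans (Feq_join a0 c0) (Feq_join0 _).
- case Ea: (kleene_eval a); case Ec: (kleene_eval c) => //= _;
  first [ case: (IHa false Ea) => a1 a0; split;
          [ exact: Feq_trans (Feq_meet a1 (Feq_refl _)) (Feq_meet0l _)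
          | exact: Feq_trans (Feq_join a0 (Feq_refl _)) (Feq_join1l _) ]
        | case: (IHc false Ec) => c1 c0; split;
          [ exact: Feq_trans (Feq_meet (Feq_refl _) c1) (Feq_meet0r _)
          | exact: Feq_trans (Feq_join (Feq_refl _) c0) (Feq_join1r _) ] ].
- case Ea: (kleene_eval a); case Ec: (kleene_eval c) => //= _;
  first [ case: (IHa true Ea) => a1 a0; split;
          [ exact: Feq_trans (Feq_join a1 (Feq_refl _)) (Feq_join1l _)
          | exact: Feq_trans (Feq_meet a0 (Feq_refl _)) (Feq_meet0l _) ]
        | case: (IHc true Ec) => c1 c0; split;
          [ exact: Feq_trans (Feq_join (Feq_refl _) c1) (Feq_join1r _)
          | exact: Feq_trans (Feq_meet (Feq_refl _) c0) (Feq_meet0r _) ] ].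
- case Ea: (kleene_eval a); case Ec: (kleene_eval c) => //= _.
  case: (IHa false Ea) (IHc false Ec) => [a1 a0] [c1 c0]; split.
  + exact: Feq_trans (Feq_join a1 c1) (Feq_join0 _).
  + exact: Feq_trans (Feq_meet a0 c0) (Feq_meet1 _).
- by case Ea: (kleene_eval a) => //= _; case: (IHa false Ea).
- by case Ea: (kleene_eval a) => //= _; case: (IHa true Ea).
Qed.

(* The lattice map F -> bool sending every generator (i = b) to false; it
   reflects 1_F. *)
Fixpoint Fval0 (t : Ft) : bool :=
  match t with
  | FEq0 _ | FEq1 _ | FBot => false
  | FTop => true
  | FMeet a b => Fval0 a && Fval0 b
  | FJoin a b => Fval0 a || Fval0 b
  end.

Lemma Feq_FTopP psi : reflect (Feq psi FTop) (Fval0 psi).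
Proof.
apply: (iffP idP).
- elim: psi => //= [|a IHa b IHb /andP [/IHa ha /IHb hb]
                    |a IHa b IHb /orP [/IHa ha|/IHb hb]].
  + by move=> _; apply: Feq_refl.
  + exact: Feq_trans (Feq_meet ha hb) (Feq_meet1 _).
  + exact: Feq_trans (Feq_join ha (Feq_refl b)) (Feq_join1l _).
  + exact: Feq_trans (Feq_join (Feq_refl a) hb) (Feq_join1r _).
- have Fval0_Feq a b : Feq a b -> Fval0 a = Fval0 b.
    by elim=> //= *; try congruence; case_values Fval0.
  by move/Fval0_Feq.
Qed.

Lemma Fval0_toF pos t : Fval0 (toF pos t) = (kleene_eval t == kl_of_bool pos).
Proof.
elim: t pos => [n|||a IHa c IHc|a IHa c IHc|a IHa] [] //=;
  by rewrite ?IHa ?IHc //; case_values kleene_eval.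
Qed.

Lemma insub_name_in (I : fset) n (In : fmem I n) :
  @insub nat (fmem I) (name_in I) n = Some (exist _ n In).
Proof. exact: insubT. Qed.

Lemma ext_name_in (I : fset) (u : cube I) n (In : fmem I n) :
  ext u n = u (exist _ n In).
Proof. by rewrite /ext insub_name_in. Qed.

Lemma evalU_vars_in (I : fset) rho rho' t : dM_vars_in I t ->
  (forall n, fmem I n -> rho n = rho' n) -> evalU rho t = evalU rho' t.
Proof.
move=> tI eq_rho; elim: t tI => //= [a IHa b IHb|a IHa b IHb|a IHa].
- by case/andP=> /IHa-> /IHb->.
- by case/andP=> /IHa-> /IHb->.
- by move/IHa->.
Qed.

Fixpoint dM_subst (s : nat -> dMt) (t : dMt) : dMt :=
  match t with
  | dVar n => s n
  | dZero => dZero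
  | dOne => dOne
  | dMeet a b => dMeet (dM_subst s a) (dM_subst s b)
  | dJoin a b => dJoin (dM_subst s a) (dM_subst s b)
  | dNeg a => dNeg (dM_subst s a)
  end.

Lemma evalU_subst rho s t :
  evalU rho (dM_subst s t) = evalU (fun n => evalU rho (s n)) t.
Proof. by elim: t => //= [a -> b ->|a -> b ->|a ->]. Qed.

(* The default [dZero] is junk: names outside [I] never occur in the terms
   this substitution is applied to. *)
Definition hom_subst (K I : fset) (h : hom K I) (n : nat) : dMt :=
  if @insub nat (fmem I) (name_in I) n is Some k then h k else dZero.

Lemma hom_subst_vars (K I : fset) (h : hom K I) t :
  dM_vars_in I t -> dM_vars_in K (dM_subst (hom_subst h) t).
Proof.
elim: t => //= [n In|a IHa b IHb|a IHa b IHb].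
- by rewrite /hom_subst insub_name_in; apply: hom_vars.
- by case/andP=> /IHa-> /IHb->.
- by case/andP=> /IHa-> /IHb->.
Qed.

Definition hom_comp (K I J : fset) (f : hom I J) (h : hom K I) : hom K J :=
  @Hom K J (fun j => dM_subst (hom_subst h) (f j))
    (fun j => hom_subst_vars h (hom_vars f j)).

Lemma hom_x_comp (K I J : fset) (f : hom I J) (h : hom K I) p :
  hom_x f (hom_x h p) = hom_x (hom_comp f h) p.
Proof.
congr pair; apply: functional_extensionality => j.
rewrite /hom_map /= evalU_subst; apply: (evalU_vars_in (hom_vars f j)) => n In.
by rewrite /hom_subst insub_name_in ext_name_in.
Qed.

Lemma toF_vars (I : fset) pos t : dM_vars_in I t -> F_vars_in I (toF pos t).
Proof.
elim: t pos => /= [n [] //|[]|[]|a IHa b IHb [] /andP [ha hb]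
                   |a IHa b IHb [] /andP [ha hb]|a IHa pos ha] //=;
  by rewrite ?IHa ?IHb.
Qed.

Lemma Fsubst_vars (I J : fset) (f : hom I J) psi : F_vars_in I (Fsubst f psi).
Proof.
elim: psi => //= [n|n|a -> b ->|a -> b ->] //;
  by case: insub => // k; apply/toF_vars/hom_vars.
Qed.

Lemma Fsubst_toF (K I : fset) (h : hom K I) pos t : dM_vars_in I t ->
  Fsubst h (toF pos t) = toF pos (dM_subst (hom_subst h) t).
Proof.
elim: t pos => /= [n [] In|[]|[]|a IHa b IHb [] /andP [ha hb]
                   |a IHa b IHb [] /andP [ha hb]|a IHa pos ha] //=;
  by rewrite ?IHa ?IHb // /hom_subst insub_name_in.
Qed.

Lemma Fsubst_comp (K I J : fset) (f : hom I J) (h : hom K I) psi :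
  Fsubst h (Fsubst f psi) = Fsubst (hom_comp f h) psi.
Proof.
elim: psi => //= [n|n|a -> b ->|a -> b ->] //;
  by case: insub => // k; rewrite Fsubst_toF //; apply: hom_vars.
Qed.

Lemma Fval0_Fsubst (I J : fset) (f : hom I J) psi :
  (forall j, kleene_eval (f j) = KlU) -> F_vars_in J psi ->
  Fval0 (Fsubst f psi) = Fval0 psi.
Proof.
move=> fU; elim: psi => //= [n In|n In|a IHa b IHb|a IHa b IHb].
- by rewrite insub_name_in Fval0_toF fU.
- by rewrite insub_name_in Fval0_toF fU.
- by case/andP=> /IHa-> /IHb->.
- by case/andP=> /IHa-> /IHb->.
Qed.

Lemma fremove_mem (I : fset) i n : fmem (fremove I i) n = (n != i) && fmem I n.
Proof. by rewrite /fmem /= mem_filter. Qed.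

Lemma fremove_size (I : fset) i :
  fmem I i -> size (sval (fremove I i)) < size (sval I).
Proof.
rewrite /fmem /= size_filter -(count_predC (pred1 i)) -has_pred1 has_count => ?.
by rewrite -[X in X < _]add0n ltn_add2r.
Qed.

Lemma widen_proof (I : fset) i (k : name_in (fremove I i)) : fmem I (sval k).
Proof. by case: k => n /=; rewrite fremove_mem => /andP []. Qed.

Definition widen (I : fset) i (k : name_in (fremove I i)) : name_in I :=
  exist _ (sval k) (widen_proof k).

Definition hom_restr (I J : fset) (f : hom I J) j : hom I (fremove J j) :=
  @Hom I (fremove J j) (fun k => f (widen k)) (fun k => hom_vars f (widen k)).

Lemma fremove_name (J : fset) (i j : name_in J) :
  sval j <> sval i -> fmem (fremove J (sval i)) (sval j).
Proof. by move/eqP=> ji; rewrite fremove_mem ji (svalP j). Qed.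

Lemma hom_x_face_restr (I J : fset) (f : hom I J) (j : name_in J) (b : bool) p :
  kleene_eval (f j) = kl_of_bool b ->
  hom_x f p = hom_x (face J (sval j) b) (hom_x (hom_restr f (sval j)) p).
Proof.
move=> fj; congr pair; apply: functional_extensionality => k.
rewrite /hom_map /=; case: eqP => [kj|/fremove_name kJ].
- have -> : k = j by apply: val_inj.
  by rewrite (evalU_kleene _ fj); case: b {fj}.
- rewrite /= (ext_name_in _ kJ) /=; congr evalU; congr (hom_fun f); exact: val_inj.
Qed.

Lemma Fsubst_face_restr (I J : fset) (f : hom I J) (j : name_in J) (b : bool) psi :
  kleene_eval (f j) = kl_of_bool b ->
  Feq (Fsubst (hom_restr f (sval j)) (Fsubst (face J (sval j) b) psi)) (Fsubst f psi).
Proof.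
move=> /toF_kleene [fj1 fj0].
have gen pos n : Feq (Fsubst (hom_restr f (sval j)) (Fsubst (face J (sval j) b)
                       (if pos then FEq1 n else FEq0 n)))
                     (Fsubst f (if pos then FEq1 n else FEq0 n)).
  have [nJ|nJ] := boolP (fmem J n); last first.
    by case: pos => /=; rewrite (insubN _ nJ); apply: Feq_refl.
  have [nj|nj] := boolP (n == sval j).
  - have ej : Sub n nJ = j by apply/val_inj/eqP.
    by case: pos => /=; rewrite (insubT _ nJ) /= nj ej;
      case: b fj1 fj0 => /= *; apply: Feq_sym.
  - have nJ' : fmem (fremove J (sval j)) n by rewrite fremove_mem nj.
    have ej : widen (Sub n nJ' : name_in _) = Sub n nJ by apply: val_inj.
    by case: pos => /=; rewrite (insubT _ nJ) /= (negbTE nj) /= (insubT _ nJ') ej;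
      apply: Feq_refl.
elim: psi => [n|n|||a Ha c Hc|a Ha c Hc].
- exact: (gen false).
- exact: (gen true).
- exact: Feq_refl.
- exact: Feq_refl.
- exact: Feq_meet.
- exact: Feq_join.
Qed.

Lemma boundary_face (I : fset) (u : cube I) (z : unitI) : boundary u ->
  exists i b (v : cube (fremove I i)), fmem I i /\ (u, z) = hom_x (face I i b) (v, z).
Proof.
case=> k uk; exists (sval k).
have [b ukb] : exists b, u k = unit_of_bool b.
  by case: uk => ?; [exists false | exists true]; apply: unitI_inj.
exists b, (fun l => u (widen l)); split; first exact: (svalP k).
congr pair; apply: functional_extensionality => j.
rewrite /hom_map /=; case: eqP => [jk|/fremove_name jI].
- by rewrite (_ : j = k) ?ukb; [case: b {ukb} | apply: val_inj].
- by rewrite /= (ext_name_in _ jI); congr u; apply: val_inj.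
Qed.

Section Naturality.

Unset Implicit Arguments.

Variable r : forall I : fset, cube I * unitI -> cube I * unitI.
Variable rpsi : forall I : fset, Ft -> cube I * unitI -> cube I * unitI.

Hypothesis r_idem : forall I p, r I (r I p) = r I p.
Hypothesis r_fix : forall I (u : cube I) (z : unitI),
  r I (u, z) = (u, z) <-> (boundary u \/ sval z = 0%R).
Hypothesis r_strict : forall I J (f : hom I J), strict f ->
  forall p, r J (hom_x f (r I p)) = r J (hom_x f p).
Hypothesis rpsi_wd : forall I psi psi', F_vars_in I psi -> F_vars_in I psi' ->
  Feq psi psi' -> rpsi I psi = rpsi I psi'.
Hypothesis rpsi_a : forall I psi, F_vars_in I psi -> Feq psi FTop ->
  forall p, rpsi I psi p = p.
Hypothesis rpsi_b : forall I psi, F_vars_in I psi -> ~ Feq psi FTop ->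
  forall p, rpsi I psi p = rpsi I psi (r I p).
Hypothesis rpsi_c : forall I psi, F_vars_in I psi ->
  forall p : cube I * unitI, sval p.2 = 0%R -> rpsi I psi p = p.
Hypothesis rpsi_d : forall I (i : nat) (b : bool), fmem I i ->
  forall psi, F_vars_in I psi ->
  forall p, rpsi I psi (hom_x (face I i b) p)
            = hom_x (face I i b) (rpsi (fremove I i) (Fsubst (face I i b) psi) p).

Set Implicit Arguments.

Definition rpsi_natural (I J : fset) (f : hom I J) :=
  forall psi, F_vars_in J psi ->
  forall p, rpsi J psi (hom_x f p) = hom_x f (rpsi I (Fsubst f psi) p).

Lemma rpsi_natural_face_restr (I J : fset) (f : hom I J) (j : name_in J) b :
  kleene_eval (f j) = kl_of_bool b ->
  rpsi_natural (hom_restr f (sval j)) -> rpsi_natural f.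
Proof.
move=> fj f'_nat psi psiJ p.
rewrite (hom_x_face_restr p fj) rpsi_d ?(svalP j) // f'_nat ?Fsubst_vars //.
by rewrite (rpsi_wd _ _ _ (Fsubst_vars _ _) (Fsubst_vars _ _) (Fsubst_face_restr psi fj))
  -(hom_x_face_restr _ fj).
Qed.

Lemma rpsi_natural_strict (I J : fset) (f : hom I J) :
  (forall j, kleene_eval (f j) = KlU) ->
  (forall i b, fmem I i -> rpsi_natural (hom_comp f (face I i b))) ->
  rpsi_natural f.
Proof.
move=> fU faces_nat psi psiJ p.
have psifI := Fsubst_vars f psi.
move: (Fval0_Fsubst fU psiJ).
case: Feq_FTopP => psif1; case: Feq_FTopP => psi1 // _; first by rewrite !rpsi_a.
(* (b) and (2) only see r_I p, a fixed point of r_I; (1) classifies those. *)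
rewrite rpsi_b // -(r_strict _ _ _ (kleeneU_strict fU)) -rpsi_b // [rpsi I _ _]rpsi_b //.
move: (r_idem I p); case: (r I p) => u z /r_fix [/(boundary_face z) [i [b [v [iI ->]]]]|z0].
- by rewrite hom_x_comp faces_nat // rpsi_d // Fsubst_comp hom_x_comp.
- by rewrite rpsi_c // rpsi_c.
Qed.

Lemma rpsi_naturality (I J : fset) (f : hom I J) : rpsi_natural f.
Proof.
have [n] := ubnP (size (sval I) + size (sval J)).
elim: n I J f => // n IH I J f sizeIJ.
have [[j fj] | fU] := classic (exists j, kleene_eval (f j) != KlU).
- have [b fjb] : exists b, kleene_eval (f j) = kl_of_bool b.
    by case: (kleene_eval (f j)) fj => // _; [exists false | exists true].
  apply: (rpsi_natural_face_restr fjb); apply: IH.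
  by have := fremove_size (svalP j); lia.
- apply: rpsi_natural_strict => [j | i b iI].
    by apply/eqP; apply: contra_notT fU => fj; exists j.
  by apply: IH; have := fremove_size iI; lia.
Qed.

End Naturality.

Theorem theoremC1
  (r : forall I : fset, cube I * unitI -> cube I * unitI)
  (rpsi : forall I : fset, Ft -> cube I * unitI -> cube I * unitI)
  (r_idem : forall I p, r I (r I p) = r I p)
  (r_fix : forall I (u : cube I) (z : unitI),
     r I (u, z) = (u, z) <-> (boundary u \/ sval z = 0%R))
  (r_strict : forall I J (f : hom I J), strict f ->
     forall p, r J (hom_x f (r I p)) = r J (hom_x f p))
  (rpsi_wd : forall I psi psi', F_vars_in I psi -> F_vars_in I psi' ->
     Feq psi psi' -> rpsi I psi = rpsi I psi')
  (rpsi_a : forall I psi, F_vars_in I psi -> Feq psi FTop ->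
     forall p, rpsi I psi p = p)
  (rpsi_b : forall I psi, F_vars_in I psi -> ~ Feq psi FTop ->
     forall p, rpsi I psi p = rpsi I psi (r I p))
  (rpsi_c : forall I psi, F_vars_in I psi ->
     forall p : cube I * unitI, sval p.2 = 0%R -> rpsi I psi p = p)
  (rpsi_d : forall I (i : nat) (b : bool), fmem I i ->
     forall psi, F_vars_in I psi ->
     forall p, rpsi I psi (hom_x (face I i b) p)
               = hom_x (face I i b) (rpsi (fremove I i) (Fsubst (face I i b) psi) p)) :
  forall I J (f : hom I J) (psi : Ft), F_vars_in J psi ->
    forall p, rpsi J psi (hom_x f p) = hom_x f (rpsi I (Fsubst f psi) p).
Proof.
move=> I J f.
exact: (rpsi_naturality r_idem r_fix r_strict rpsi_wd rpsi_a rpsi_b rpsi_c rpsi_d).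
Qed.
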